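(* Let $\Gamma=(V,E)$ be a finite vertex-transitive graph admitting an extended irregular dominating set $S$. Then for every vertex $u\in V$ there exists a unique vertex $v\in S$ covering $u$.
   Context: Let $\Gamma=(V,E)$ be a finite simple undirected graph with graph distance $d$. A vertex $v$ carrying a non-negative integer label $\ell$ dominates (covers) exactly the vertices $u$ with $d(u,v)=\ell$; a vertex labeled $0$ dominates only itself. An extended irregular dominating set is a set $S\subseteq V$ together with a labeling $\lambda:S\to\mathbb{Z}_{\ge 0}$ with distinct labels on distinct vertices, such that every vertex of $V$ is dominated by at least one vertex of $S$; it is assumed that some vertex of $S$ has label $0$. *)

From mathcomp Require Import all_boot all_fingroup.
Set Implicit Arguments. Unset Strict Implicit. Unset Printing Implicit Defensive.

Definition simple_graph (T : finType) (e : rel T) : Prop :=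
  symmetric e /\ irreflexive e.

Fixpoint walk (T : finType) (e : rel T) (n : nat) (u v : T) : bool :=
  match n with
  | 0 => u == v
  | n'.+1 => [exists w, e u w && walk e n' w v]
  end.

(* Graph distance: d(u,v) = l, i.e. a walk of length l exists and no shorter
   one does (vertices in different components are at no finite distance). *)
Definition at_dist (T : finType) (e : rel T) (u v : T) (l : nat) : bool :=
  walk e l u v && [forall k : 'I_l, ~~ walk e k u v].

Definition graph_aut (T : finType) (e : rel T) (f : {perm T}) : Prop :=
  forall x y, e (f x) (f y) = e x y.

Definition vertex_transitive (T : finType) (e : rel T) : Prop :=
  forall x y : T, exists f : {perm T}, graph_aut e f /\ f x = y.

Definition covers (T : finType) (e : rel T) (lam : T -> nat) (v u : T) : bool :=
  at_dist e v u (lam v).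

Definition ext_irregular_dominating (T : finType) (e : rel T)
    (S : {set T}) (lam : T -> nat) : Prop :=
  {in S &, injective lam} /\
  (forall u : T, exists2 v, v \in S & covers e lam v u) /\
  (exists2 v, v \in S & lam v = 0).

From mathcomp Require Import all_boot all_fingroup.
Set Implicit Arguments. Unset Strict Implicit.

(* In a vertex-transitive graph the number of vertices at distance l from v
   does not depend on v.  Hence the sets covered by the vertices v of S (the
   spheres of radius lam v around v) have the same total size as the spheres
   of radii lam v around one fixed vertex u; as the labels are distinct, the
   latter are pairwise disjoint, so the total is at most |V|.  Sets of total
   size at most |V| that cover V partition it, so each vertex is covered
   exactly once. *)

Section DoubleCounting.
Variables (I T : finType).

Lemma sum_card_count (S : {set I}) (A : I -> {set T}) :
  \sum_(i in S) #|A i| = \sum_x #|[set i in S | x \in A i]|.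
Proof.
under eq_bigr do rewrite -sum1_card big_mkcond /=.
rewrite exchange_big; apply: eq_bigr => x _.
by rewrite -big_mkcondr sum1_card; apply: eq_card => i; rewrite inE.
Qed.

Lemma eq1_of_sum_le_card (F : T -> nat) :
  (forall x, 0 < F x) -> \sum_x F x <= #|T| -> forall x, F x = 1.
Proof.
move=> F_gt0 sumF_le x.
have : \sum_y (F y - 1) == 0 by rewrite sumnB // sum1_card subn_eq0.
rewrite sum_nat_eq0 => /forallP/(_ x)/implyP/(_ isT).
by rewrite subn_eq0 => Fx_le1; apply/eqP; rewrite eqn_leq Fx_le1 F_gt0.
Qed.

End DoubleCounting.

Section Spheres.
Variables (T : finType) (e : rel T).

Lemma walk_aut (f : {perm T}) : graph_aut e f ->
  forall n x y, walk e n (f x) (f y) = walk e n x y.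
Proof.
move=> f_aut; elim=> [|n IHn] x y /=; first by rewrite (inj_eq perm_inj).
apply/existsP/existsP => -[w /andP[exw wy]].
- by exists ((f^-1)%g w); rewrite -f_aut -IHn permKV exw wy.
- by exists (f w); rewrite f_aut IHn exw wy.
Qed.

Lemma at_dist_aut (f : {perm T}) : graph_aut e f ->
  forall x y l, at_dist e (f x) (f y) l = at_dist e x y l.
Proof.
move=> f_aut x y l; rewrite /at_dist walk_aut //; congr (_ && _).
by apply: eq_forallb => k; rewrite walk_aut.
Qed.

Lemma at_dist_uniq x y l l' : at_dist e x y l -> at_dist e x y l' -> l = l'.
Proof.
move=> /andP[walk_l /forallP short_l] /andP[walk_l' /forallP short_l'].
case: (ltngtP l l') => // lt_ll'.
- by move: (short_l' (Ordinal lt_ll')); rewrite walk_l.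
- by move: (short_l (Ordinal lt_ll')); rewrite walk_l'.
Qed.

Definition sphere x l := [set y | at_dist e x y l].

Lemma card_sphere_aut (f : {perm T}) : graph_aut e f ->
  forall x l, #|sphere (f x) l| = #|sphere x l|.
Proof.
move=> f_aut x l; rewrite -[RHS](card_imset _ (@perm_inj _ f)).
apply: eq_card => y; rewrite -[y](permKV f) mem_imset; last exact: perm_inj.
by rewrite !inE at_dist_aut.
Qed.

Lemma card_sphere_transitive : vertex_transitive e ->
  forall x y l, #|sphere x l| = #|sphere y l|.
Proof. by move=> vt x y l; have [f [f_aut <-]] := vt x y; rewrite card_sphere_aut. Qed.

Lemma sum_card_sphere_le x (S : {set T}) (r : T -> nat) :
  {in S &, injective r} -> \sum_(v in S) #|sphere x (r v)| <= #|T|.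
Proof.
move=> r_inj; rewrite sum_card_count -sum1_card leq_sum // => y _.
apply/card_le1_eqP => v w; rewrite !inE => /andP[vS xyv] /andP[wS xyw].
exact: r_inj _ _ wS vS (at_dist_uniq xyw xyv).
Qed.

End Spheres.

Theorem theorem2p5 (T : finType) (e : rel T) (S : {set T}) (lam : T -> nat) :
  simple_graph e -> vertex_transitive e -> ext_irregular_dominating e S lam ->
  forall u : T, exists! v : T, v \in S /\ covers e lam v u.
Proof.
move=> _ vt [lam_inj [covered _]] u.
pose coverers y := [set v in S | y \in sphere e v (lam v)].
have coverers_gt0 y : 0 < #|coverers y|.
  have [v vS cov_vy] := covered y.
  by apply/card_gt0P; exists v; rewrite !inE vS.
have sum_le : \sum_y #|coverers y| <= #|T|.
  rewrite -sum_card_count.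
  under eq_bigr do rewrite (card_sphere_transitive vt _ u).
  exact: sum_card_sphere_le.
have /eqP/cards1P[v coverers_u] := eq1_of_sum_le_card coverers_gt0 sum_le u.
have coverersE w : (w \in S) && covers e lam w u = (w == v).
  by rewrite -in_set1 -coverers_u !inE.
exists v; split=> [|w [wS cov_wu]]; first by apply/andP; rewrite coverersE.
by apply/esym/eqP; rewrite -coverersE wS.
Qed.
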